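(* Let $0<\epsilon_1,\epsilon_2<1$ and, for $n,d$, let $m=\frac{2}{\epsilon_1}\log^3\frac{15n}{\epsilon_2 d}$. There exist $c>0$ and a sufficiently large $K$ such that the following holds for all $n$ and $d$ with $n/d>K$. If $G$ is an $n$-vertex graph with $\delta(G)=d$ that contains no $K_{cd}^{(3)}$-immersion, then $G$ is $(dm^x, d^2m^x, d/2)$-dense for every integer $0<x<100$.
   Context: All logarithms are natural. $d(G)$ is the average degree, $\delta(G)$ the minimum degree. For $W\subseteq E(G)$ and $U\subseteq V(G)$, $G\setminus W-U$ is the graph obtained by deleting the edges of $W$ and the vertices of $U$. A graph $G$ is $(s,t,\gamma)$-dense if for every $U\subseteq V(G)$ with $|U|\leq s$ and every $W\subseteq E(G)$ with $|W|\leq t$ we have $d(G\setminus W-U)\geq\gamma$. An $H$-immersion is an injective map $\phi:V(H)\to V(G)$ with, for each $uv\in E(H)$, a $\phi(u)$–$\phi(v)$ path $P_{uv}$, the paths pairwise edge-disjoint; a $K_t^{(\ell)}$-immersion is a $K_t$-immersion in which all these paths have length exactly $\ell+1$. Floors are omitted. *)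

From HB Require Import structures.
From mathcomp Require Import all_boot all_order all_algebra.
From mathcomp Require Import all_classical all_reals all_analysis.
Set Implicit Arguments. Unset Strict Implicit. Unset Printing Implicit Defensive.
Import Order.TTheory GRing.Theory Num.Theory.
Local Open Scope ring_scope.

Definition simple_graph (T : finType) (e : rel T) : Prop :=
  symmetric e /\ irreflexive e.

Definition edges (T : finType) (e : rel T) : {set {set T}} :=
  [set f : {set T} | [exists x, exists y, e x y && (f == [set x; y])]].

Definition deg (T : finType) (e : rel T) (v : T) : nat := #|[set u | e v u]|.

(* Minimum degree (0 for the empty graph). *)
Definition mindeg (T : finType) (e : rel T) : nat :=
  \big[minn/#|T|]_(v : T) deg e v.

Definition del_edges (T : finType) (e : rel T) (W : {set {set T}}) (U : {set T})
  : {set {set T}} :=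
  [set f in edges e | (f \notin W) && [disjoint f & U]].

Definition avgdeg_del (R : realType) (T : finType) (e : rel T)
  (W : {set {set T}}) (U : {set T}) : R :=
  if #|~: U| == 0%N then 0
  else (2 * #|del_edges e W U|)%:R / (#|~: U|)%:R.

Definition stg_dense (R : realType) (T : finType) (e : rel T) (s t gamma : R) : Prop :=
  forall (U : {set T}) (W : {set {set T}}),
    W \subset edges e -> (#|U|%:R <= s) -> (#|W|%:R <= t) ->
    gamma <= avgdeg_del R e W U.

Definition walk_edges (T : finType) (s : seq T) : {set {set T}} :=
  [set f : {set T} | has (fun x : T * T => f == [set x.1; x.2]) (zip s (behead s))].

Definition is_path_len (T : finType) (e : rel T) (a b : T) (len : nat) (p : seq T) : Prop :=
  [/\ p != [::], head a p = a, last a p = b,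
      path e a (behead p) & uniq p /\ size p = len.+1].

(* K_t^{(l)}-immersion: injective phi : 'I_t -> V(G) and, for every pair i < j,
   a phi i -- phi j path of length exactly l+1, pairwise edge-disjoint. *)
Definition has_Kt_l_immersion (T : finType) (e : rel T) (t l : nat) : Prop :=
  exists (phi : 'I_t -> T) (P : 'I_t -> 'I_t -> seq T),
    injective phi /\
    (forall i j : 'I_t, (i < j)%N -> is_path_len e (phi i) (phi j) l.+1 (P i j)) /\
    (forall i j i' j' : 'I_t, (i < j)%N -> (i' < j')%N -> (i, j) <> (i', j') ->
       [disjoint walk_edges (P i j) & walk_edges (P i' j')]).

From HB Require Import structures.
From mathcomp Require Import all_boot all_order all_algebra.
From mathcomp Require Import all_classical all_reals all_analysis.
From mathcomp Require Import zify ring lra.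
Set Implicit Arguments. Unset Strict Implicit. Unset Printing Implicit Defensive.

(* Suppose G \ W - U has average degree below d/2 with |U| <= d L, |W| <= d^2 L,
   where L is about m^x.  As n/d dominates every fixed power of m ~ log^3 (n/d),
   the vertices outside U send most of their >= d edges into U, so some vertex b
   outside U has >= d/8 neighbours in U; double counting shows that few pairs of
   these neighbours have fewer than 5t common neighbours outside U (t = d/1000).
   Take t of these neighbours lying in few such bad pairs as branch vertices and
   join each pair greedily by a path  phi i - b - y - b' - phi j  with b, b'
   outside U and y another such neighbour, used as a midpoint at most t times.
   At every step fewer than 4t of the >= 5t candidates for b and for b' are
   blocked by earlier paths, so the paths are edge-disjoint: a K_t^(3)-immersion. *)

Lemma leq_sum_subset (I : finType) (A B : {pred I}) (F : I -> nat) :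
  A \subset B -> \sum_(i in A) F i <= \sum_(i in B) F i.
Proof.
move=> sAB; have := subset_le_big leqnn (fun m n => leq_addr n m) F sAB (P := predT) (x := 0).
by rewrite !big_mkcondr.
Qed.

Lemma uniq_size_le_card (T : finType) (s : seq T) : uniq s -> size s <= #|T|.
Proof. by move=> us; rewrite -(card_uniqP us) max_card. Qed.

Lemma exists_notin_seq (T : finType) (A : {pred T}) (s : seq T) :
  size s < #|A| -> exists2 x, x \in A & x \notin s.
Proof.
move=> sA; case: (pickP [pred x | (x \in A) && (x \notin s)]) => [x /andP[]|none].
  by exists x.
have /subset_leq_card As : A \subset s.
  by apply/fintype.subsetP => x xA; move/negbT: (none x); rewrite /= xA negbK.
by have := leq_trans As (card_size s); rewrite leqNgt sA.
Qed.

Lemma count_fst_le_card (A B : finType) (s : seq (A * B)) (a : A) :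
  uniq s -> count (fun q => q.1 == a) s <= #|B|.
Proof.
move=> us; rewrite -size_filter -(size_map snd); apply: uniq_size_le_card.
rewrite map_inj_in_uniq ?filter_uniq // => [[a1 b1] [a2 b2]].
by rewrite !mem_filter => /andP[/eqP/= -> _] /andP[/eqP/= -> _] /= ->.
Qed.

Lemma count_snd_le_card (A B : finType) (s : seq (A * B)) (b : B) :
  uniq s -> count (fun q => q.2 == b) s <= #|A|.
Proof.
move=> us; have := count_fst_le_card b (s := [seq (q.2, q.1) | q <- s]).
rewrite count_map map_inj_uniq //; first exact.
by move=> [? ?] [? ?] [-> ->].
Qed.

Lemma sum_count_eq (I : Type) (T : finType) (c : I -> T) (s : seq I) :
  \sum_(y : T) count (fun q => c q == y) s = size s.
Proof.
elim: s => [|q s IH] /=; first by rewrite big1.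
rewrite big_split /= IH (bigD1 (c q)) //= eqxx big1 ?add1n ?addn0 // => y /negbTE.
by rewrite eq_sym => ->.
Qed.

Lemma card_frequent_values_mul (I : Type) (T : finType) (c : I -> T) (s : seq I) k :
  #|[set y | k <= count (fun q => c q == y) s]| * k <= size s.
Proof.
rewrite -(sum_count_eq c s) -sum1_card big_distrl /=.
apply: leq_trans (_ : \sum_(y in [set y | k <= count (fun q => c q == y) s])
                         count (fun q => c q == y) s <= _).
  by apply: leq_sum => y; rewrite inE mul1n.
by rewrite [leqRHS](bigID [pred y | y \in [set y | k <= count (fun q => c q == y) s]]) leq_addr.
Qed.

Lemma set2_eq_inj (T : finType) (x y u w : T) :
  [set x; y] = [set u; w] -> x != w -> x = u /\ y = w.
Proof.
move=> E xw; have /set2P[xu|] : x \in [set u; w] by rewrite -E set21.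
  split=> //; have /set2P[yu|//] : y \in [set u; w] by rewrite -E set22.
  have /set2P[] : w \in [set x; y] by rewrite E set22.
    by move=> wx; rewrite wx eqxx in xw.
  by move=> wy; rewrite wy yu -xu eqxx in xw.
by move/eqP; rewrite (negbTE xw).
Qed.

Lemma set2_eq_swap (T : finType) (x y u w : T) :
  [set x; y] = [set u; w] -> x != u -> x = w /\ y = u.
Proof. by rewrite (finset.setUC [set u]); exact: set2_eq_inj. Qed.

Lemma mem_walk_edges5 (T : finType) (a b c d g : T) f :
  (f \in walk_edges [:: a; b; c; d; g]) =
  [|| f == [set a; b], f == [set b; c], f == [set c; d] | f == [set d; g]].
Proof. by rewrite inE /= orbF. Qed.

Lemma ltn_of_cube_bound (u n d L : nat) : 0 < d -> 0 < L ->
  u <= d * L -> 1024 * (d * (L * (L * L))) <= n -> u < n.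
Proof.
move=> d_gt0 L_gt0 uL Ln.
have : d * L <= d * (L * (L * L)) by rewrite leq_mul2l leq_pmulr ?muln_gt0 ?L_gt0 ?orbT.
have : 0 < d * L by rewrite muln_gt0 d_gt0.
lia.
Qed.

Definition codeg (T : finType) (e : rel T) (U : {set T}) (u w : T) : nat :=
  #|[set b in ~: U | e u b && e w b]|.

Section GreedyRouting.
Variables (T : finType) (e : rel T) (U : {set T}) (t : nat) (phi : 'I_t -> T).
Hypotheses (e_sym : symmetric e) (phi_inj : injective phi) (phiU : forall i, phi i \in U).

Lemma neq_in_notin (x y : T) : x \in U -> y \notin U -> x != y.
Proof. by move=> xU; apply: contraNneq => <-. Qed.

Definition route (q : 'I_t * 'I_t) (z : T * T * T) : seq T :=
  [:: phi q.1; z.1.1; z.1.2; z.2; phi q.2].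

Definition good_route (q : 'I_t * 'I_t) (z : T * T * T) : Prop :=
  [/\ z.1.1 \notin U, z.2 \notin U, z.1.2 \in U, z.1.2 \notin codom phi &
      z.1.1 != z.2 /\
      [/\ e (phi q.1) z.1.1, e z.1.1 z.1.2, e z.1.2 z.2 & e z.2 (phi q.2)]].

Definition routing (s : seq ('I_t * 'I_t)) (f : 'I_t * 'I_t -> T * T * T) : Prop :=
  [/\ forall q, q \in s -> good_route q (f q),
      forall q1 q2, q1 \in s -> q2 \in s -> q1 != q2 ->
        [disjoint walk_edges (route q1 (f q1)) & walk_edges (route q2 (f q2))] &
      forall y, count (fun q => (f q).1.2 == y) s <= t].

Definition used_nbrs s f (v : T) : {set T} :=
  [set b | has (fun q => [set v; b] \in walk_edges (route q (f q))) s].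

Lemma used_nbrs_branch s f i b : (forall q, q \in s -> good_route q (f q)) ->
  b \notin U -> b \in used_nbrs s f (phi i) ->
  b \in [seq (f q).1.1 | q <- s & q.1 == i] ++ [seq (f q).2 | q <- s & q.2 == i].
Proof.
move=> good bU; rewrite inE => /hasP[q qs]; rewrite mem_walk_edges5 mem_cat.
have [b1U b2U yU ycod _] := good q qs; have iU := phiU i.
have iy : phi i != (f q).1.2 by apply: contraNneq ycod => <-; rewrite codom_f.
case/or4P => /eqP E.
- have [/phi_inj -> ->] := set2_eq_inj E (neq_in_notin iU b1U).
  by apply/orP; left; apply: map_f; rewrite mem_filter eqxx.
- by have [E1 _] := set2_eq_inj E iy; rewrite E1 (negbTE b1U) in iU.
- by have [E1 _] := set2_eq_swap E iy; rewrite E1 (negbTE b2U) in iU.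
- have [/phi_inj -> ->] := set2_eq_swap E (neq_in_notin iU b2U).
  by apply/orP; right; apply: map_f; rewrite mem_filter eqxx.
Qed.

Lemma used_nbrs_center s f y b : (forall q, q \in s -> good_route q (f q)) ->
  y \in U -> y \notin codom phi -> b \notin U -> b \in used_nbrs s f y ->
  b \in [seq (f q).1.1 | q <- s & (f q).1.2 == y] ++ [seq (f q).2 | q <- s & (f q).1.2 == y].
Proof.
move=> good yU ycod bU; rewrite inE => /hasP[q qs]; rewrite mem_walk_edges5 mem_cat.
have [b1U b2U _ _ _] := good q qs.
have yphi k : y != phi k by apply: contraNneq ycod => ->; rewrite codom_f.
case/or4P => /eqP E.
- by have [E1 _] := set2_eq_swap E (yphi _); rewrite E1 (negbTE b1U) in yU.
- have [-> ->] := set2_eq_swap E (neq_in_notin yU b1U).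
  by apply/orP; left; apply: map_f; rewrite mem_filter eqxx.
- have [-> ->] := set2_eq_inj E (neq_in_notin yU b2U).
  by apply/orP; right; apply: map_f; rewrite mem_filter eqxx.
- by have [E1 _] := set2_eq_inj E (yphi _); rewrite E1 (negbTE b2U) in yU.
Qed.

(* At most 2t used edges at phi i, at most 2t - 2 at y, and a itself: fewer than
   4t common neighbours are blocked. *)
Lemma fresh_branch s f (i : 'I_t) y a :
  uniq s -> (forall q, q \in s -> good_route q (f q)) ->
  y \in U -> y \notin codom phi -> count (fun q => (f q).1.2 == y) s < t ->
  4 * t <= codeg e U (phi i) y ->
  exists b, [/\ b \notin U, e (phi i) b, e y b, b != a &
                b \notin used_nbrs s f (phi i) /\ b \notin used_nbrs s f y].
Proof.
move=> us good yU ycod load_y cdeg.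
set Si := [seq (f q).1.1 | q <- s & q.1 == i] ++ [seq (f q).2 | q <- s & q.2 == i].
set Sy := [seq (f q).1.1 | q <- s & (f q).1.2 == y] ++
          [seq (f q).2 | q <- s & (f q).1.2 == y].
have size_Si : size Si <= 2 * t.
  rewrite size_cat !size_map !size_filter mul2n -addnn.
  apply: leq_add; rewrite -[leqRHS]card_ord.
  - exact: count_fst_le_card.
  - exact: count_snd_le_card.
have size_Sy : size Sy + 2 <= 2 * t by rewrite size_cat !size_map !size_filter; lia.
have [b] : exists2 b, b \in [set b in ~: U | e (phi i) b && e y b] & b \notin a :: Si ++ Sy.
  by apply: exists_notin_seq; apply: leq_trans cdeg; rewrite /= size_cat; lia.
rewrite !inE negb_or mem_cat negb_or => /and3P[bU eib eyb] /and3P[ba bSi bSy].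
exists b; split=> //; split.
- by apply: contra bSi; exact: used_nbrs_branch.
- by apply: contra bSy; exact: used_nbrs_center.
Qed.

Lemma route_fresh_disjoint s f p b y b' q :
  b \notin used_nbrs s f (phi p.1) -> b \notin used_nbrs s f y ->
  b' \notin used_nbrs s f y -> b' \notin used_nbrs s f (phi p.2) -> q \in s ->
  [disjoint walk_edges (route p (b, y, b')) & walk_edges (route q (f q))].
Proof.
move=> b1 b2 b'1 b'2 qs; rewrite disjoint_subset; apply/fintype.subsetP => g.
rewrite mem_walk_edges5 /= => /or4P[] /eqP ->; rewrite inE; apply/negP => used.
- by case/negP: b1; rewrite inE; apply/hasP; exists q.
- by case/negP: b2; rewrite inE; apply/hasP; exists q => //=; rewrite finset.setUC.
- by case/negP: b'1; rewrite inE; apply/hasP; exists q.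
- by case/negP: b'2; rewrite inE; apply/hasP; exists q => //=; rewrite finset.setUC.
Qed.

Hypothesis avail : forall (i j : 'I_t) (O : {set T}), i < j -> #|O| <= t ->
  exists y, [/\ y \notin O, y \in U, y \notin codom phi,
                5 * t <= codeg e U (phi i) y & 5 * t <= codeg e U (phi j) y].

Lemma routing_cons (s : seq ('I_t * 'I_t)) f (p : 'I_t * 'I_t) :
  uniq (p :: s) -> p.1 < p.2 -> routing s f -> exists f', routing (p :: s) f'.
Proof.
case/andP=> ps us lt [good disj load].
have t_gt0 : 0 < t by apply: leq_ltn_trans (ltn_ord p.1).
set O := [set y | t <= count (fun q => (f q).1.2 == y) s].
have card_O : #|O| <= t.
  rewrite -(leq_pmul2r t_gt0); apply: leq_trans (card_frequent_values_mul _ s t) _.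
  by have := uniq_size_le_card us; rewrite card_prod card_ord.
have [y [yO yU ycod deg1 deg2]] := avail lt card_O.
have load_y : count (fun q => (f q).1.2 == y) s < t by move: yO; rewrite inE -ltnNge.
have four_le k : 5 * t <= k -> 4 * t <= k by lia.
have [b [bU e1 e2 _ [b1 b2]]] :=
  fresh_branch (phi p.1) us good yU ycod load_y (four_le _ deg1).
have [b' [b'U e3 e4 b'b [b'1 b'2]]] :=
  fresh_branch b us good yU ycod load_y (four_le _ deg2).
pose f' q := if q == p then (b, y, b') else f q.
have f'E q : q \in s -> f' q = f q.
  by rewrite /f'; case: eqP => // ->; rewrite (negbTE ps).
have f'p : f' p = (b, y, b') by rewrite /f' eqxx.
exists f'; split.
- move=> q; rewrite in_cons => /predU1P[-> | qs]; last by rewrite f'E //; apply: good.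
  rewrite f'p; split=> //=; split; first by rewrite eq_sym.
  by split; rewrite // e_sym.
- move=> q1 q2; rewrite !in_cons => /predU1P[-> | q1s] /predU1P[-> | q2s];
    rewrite ?eqxx // => q12; rewrite ?f'p.
  + by rewrite (f'E _ q2s); exact: route_fresh_disjoint b1 b2 b'2 b'1 q2s.
  + by rewrite (f'E _ q1s) disjoint_sym; exact: route_fresh_disjoint b1 b2 b'2 b'1 q1s.
  + by rewrite (f'E _ q1s) (f'E _ q2s); apply: disj.
- move=> z /=; rewrite /f' eqxx (@eq_in_count _ _ (fun q => (f q).1.2 == z)).
    by case: eqVneq => [<- | _]; rewrite ?add1n ?add0n.
  by move=> q qs /=; rewrite -/(f' q) f'E.
Qed.

Lemma routing_exists s : uniq s -> all (fun q : 'I_t * 'I_t => q.1 < q.2) s ->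
  exists f, routing s f.
Proof.
elim: s => [|p s IH] /=.
  by move=> _ _; exists (fun q => (phi q.1, phi q.1, phi q.1)); split.
case/andP=> ps us /andP[lt lts]; have [f Hf] := IH us lts.
by apply: (routing_cons _ lt Hf); apply/andP.
Qed.

Lemma good_route_path (i j : 'I_t) z : i < j -> good_route (i, j) z ->
  is_path_len e (phi i) (phi j) 4 (route (i, j) z).
Proof.
move=> lt [b1U b2U yU ycod [b12 [e1 e2 e3 e4]]].
split=> //=; first by rewrite e1 e2 e3 e4.
split=> //; rewrite !inE !negb_or.
have ij : phi i != phi j by apply: contraTneq lt => /phi_inj ->; rewrite ltnn.
have phi_y k : phi k != z.1.2 by apply: contraNneq ycod => <-; rewrite codom_f.
have phi_b1 k : phi k != z.1.1 := neq_in_notin (phiU k) b1U.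
have phi_b2 k : phi k != z.2 := neq_in_notin (phiU k) b2U.
have y_b1 : z.1.2 != z.1.1 := neq_in_notin yU b1U.
have y_b2 : z.1.2 != z.2 := neq_in_notin yU b2U.
rewrite ij b12 phi_y phi_b1 phi_b2 -!(eq_sym (phi j)) phi_y phi_b1 phi_b2.
by rewrite (eq_sym z.1.1) y_b1 y_b2.
Qed.

Lemma routing_immersion : has_Kt_l_immersion e t 3.
Proof.
set s := [seq q <- enum {: 'I_t * 'I_t} | (q : 'I_t * 'I_t).1 < q.2].
have us : uniq s by rewrite filter_uniq ?enum_uniq.
have lts : all (fun q : 'I_t * 'I_t => q.1 < q.2) s.
  by apply/allP => q; rewrite mem_filter => /andP[].
have [f [good disj _]] := routing_exists us lts.
have mem_s (i j : 'I_t) : i < j -> (i, j) \in s by rewrite mem_filter mem_enum => ->.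
exists phi, (fun i j => route (i, j) (f (i, j))); split=> //; split.
  by move=> i j lt; apply: good_route_path => //; apply/good/mem_s.
by move=> i j i' j' lt lt' neq; apply: disj; rewrite ?mem_s //; apply/eqP.
Qed.

End GreedyRouting.

Section OutsideArcs.
Variables (T : finType) (e : rel T).
Hypothesis e_irr : irreflexive e.

Definition out_arcs (U : {set T}) : {set T * T} :=
  [set p | [&& p.1 \notin U, p.2 \notin U & e p.1 p.2]].

Lemma card_out_arcs U : #|out_arcs U| = \sum_(b in ~: U) #|[set u | e b u] :\: U|.
Proof.
rewrite -sum1_card big_mkcond /=.
transitivity (\sum_(b in ~: U) \sum_(u : T) ((u \notin U) && e b u : nat)).
  rewrite pair_big /= [RHS]big_mkcond /=; apply: eq_bigr => p _.
  by rewrite !inE andbT; case: (p.1 \in U); case: (p.2 \in U); case: (e _ _).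
apply: eq_bigr => b _; rewrite -sum1_card [RHS]big_mkcond /=; apply: eq_bigr => u _.
by rewrite !inE andbC.
Qed.

Lemma set2_eq_pair (x y a b : T) : x != y -> [set x; y] = [set a; b] ->
  (x, y) \in [set (a, b); (b, a)].
Proof.
move=> xy E; rewrite !inE !xpair_eqE.
have [xb|xb] := eqVneq x b; last by have [-> ->] := set2_eq_inj E xb; rewrite !eqxx.
have [xa|xa] := eqVneq x a; last by have [_ ->] := set2_eq_swap E xa; rewrite !eqxx orbT.
have /set2P[ya|yb] : y \in [set a; b] by rewrite -E set22.
  by rewrite xa ya eqxx in xy.
by rewrite xb yb eqxx in xy.
Qed.

(* An arc spans an edge of G - U, which lies in W or survives in G \ W - U. *)
Lemma card_out_arcs_le U W : #|out_arcs U| <= 2 * (#|del_edges e W U| + #|W|).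
Proof.
rewrite -sum1_card (partition_big_imset (fun p : T * T => [set p.1; p.2])) /=.
apply: (@leq_trans (\sum_(f in [set [set p.1; p.2] | p in out_arcs U]) 2)).
  apply: leq_sum => f /imsetP[[a b] _ ->] /=; rewrite sum1_card.
  apply: (@leq_trans #|[set (a, b); (b, a)]|); last by rewrite cards2; case: (_ != _).
  apply: subset_leq_card; apply/fintype.subsetP => [[x y]] /andP[xyU /eqP E].
  apply: set2_eq_pair E; move: xyU; rewrite inE => /and3P[_ _ exy].
  by apply: contraTneq exy => ->; rewrite e_irr.
rewrite sum_nat_const mulnC leq_mul2l /=.
apply: leq_trans (_ : #|del_edges e W U :|: W| <= _); last by rewrite cardsU leq_subr.
apply: subset_leq_card; apply/fintype.subsetP => f /imsetP[[x y] Hp ->] /=.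
move: Hp; rewrite !inE /= => /and3P[xU yU exy].
case: (boolP ([set x; y] \in W)) => xyW; rewrite ?orbT // orbF.
apply/and3P; split=> //.
  by apply/existsP; exists x; apply/existsP; exists y; rewrite exy eqxx.
by rewrite disjoint_subset; apply/fintype.subsetP => z; rewrite !inE => /orP[] /eqP ->.
Qed.

End OutsideArcs.

Section SparseRemainder.
Variables (T : finType) (e : rel T).
Hypotheses (e_sym : symmetric e) (e_irr : irreflexive e).
Variables (U : {set T}) (W : {set {set T}}) (d L t : nat).
Hypothesis deg_ge : forall v, d <= deg e v.
Hypothesis card_U : #|U| <= d * L.
Hypothesis card_W : #|W| <= d * d * L.
Hypothesis L_gt0 : 0 < L.
Hypothesis card_T : 1024 * (d * (L * (L * L))) <= #|T|.
Hypothesis t_le : 1000 * t <= d.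
Hypothesis t_gt0 : 0 < t.
Hypothesis sparse : 4 * #|del_edges e W U| < d * #|~: U|.

Definition nbrsU (b : T) : {set T} := [set u | e b u] :&: U.

Definition d0 := d %/ 8.

Definition rich : {set T} := [set b in ~: U | d0 <= #|nbrsU b|].

Lemma d0_le : 8 * d0 <= d.
Proof. by rewrite /d0 mulnC leq_divM. Qed.

Lemma d0_ge : d <= 16 * d0.
Proof. by rewrite /d0; have := divn_eq d 8; have := ltn_pmod d (isT : 0 < 8); lia. Qed.

Lemma d0_large : 62 * t <= d0.
Proof. by have := d0_ge; lia. Qed.

Lemma card_outside_large : 1023 * (d * (L * (L * L))) <= #|~: U|.
Proof.
have := cardsC U; have : d * L <= d * (L * (L * L)).
  by rewrite leq_mul2l leq_pmulr ?muln_gt0 ?L_gt0 ?orbT.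
lia.
Qed.

(* Out-arcs of ~: U are few (sparse, |W| small), so most of the degree >= d of
   each vertex outside U goes into U. *)
Lemma sum_nbrsU_large : 7 * (d * #|~: U|) < 16 * \sum_(b in ~: U) #|nbrsU b|.
Proof.
have deg_split : \sum_(b in ~: U) d <=
    \sum_(b in ~: U) (#|nbrsU b| + #|[set u | e b u] :\: U|).
  by apply: leq_sum => b _; rewrite /nbrsU cardsID; apply: deg_ge.
rewrite sum_nat_const big_split /= -card_out_arcs in deg_split.
have arcs := card_out_arcs_le e_irr U W.
have big := card_outside_large.
have : d * (32 * (d * L)) <= d * #|~: U|.
  rewrite leq_mul2l; apply/orP; right; apply: leq_trans big.
  have : L <= L * (L * L) by rewrite leq_pmulr ?muln_gt0 ?L_gt0.
  nia.
move: deg_split arcs sparse card_W; nia.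
Qed.

Lemma card_rich_large : d * #|~: U| <= 4 * (#|rich| * #|U|).
Proof.
have := sum_nbrsU_large; rewrite (bigID [pred b | b \in rich]) /=.
have rich_part : \sum_(b in ~: U | b \in rich) #|nbrsU b| <= #|rich| * #|U|.
  rewrite (eq_bigl [pred b | b \in rich]); last first.
    by move=> b; rewrite /= !inE; case: (b \in U); rewrite ?andbF.
  rewrite -sum_nat_const; apply: leq_sum => b _.
  by apply: subset_leq_card; apply: subsetIr.
have poor_part : \sum_(b in ~: U | b \notin rich) #|nbrsU b| <= #|~: U| * d0.
  apply: leq_trans (_ : \sum_(b in ~: U) d0 <= _); last by rewrite sum_nat_const.
  rewrite [leqRHS](bigID [pred b | b \in rich]) /=; apply: leq_trans (leq_addl _ _).
  by apply: leq_sum => b /andP[]; rewrite !inE => -> /=; rewrite -ltnNge => /ltnW.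
have := d0_le; move: rich_part poor_part; nia.
Qed.

Definition bad (u w : T) := (u != w) && (codeg e U u w < 5 * t).

Definition bad_deg (A : {set T}) (a : T) := #|[set w in A | bad a w]|.

Definition bad_pairs (b : T) := \sum_(u in nbrsU b) bad_deg (nbrsU b) u.

Lemma sum_nbrsU b (F : T -> nat) : \sum_(u in nbrsU b) F u = \sum_(u in U) e b u * F u.
Proof.
rewrite big_mkcond [RHS]big_mkcond; apply: eq_bigr => u _; rewrite !inE.
by case: (e b u); case: (u \in U); rewrite ?mul1n ?mul0n.
Qed.

Lemma bad_pairs_expand b :
  bad_pairs b = \sum_(u in U) \sum_(w in U) e b u * (e b w * bad u w).
Proof.
rewrite /bad_pairs sum_nbrsU; apply: eq_bigr => u _.
rewrite /bad_deg -big_distrr /= -sum_nbrsU; congr (_ * _).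
rewrite -sum1_card big_mkcond [RHS]big_mkcond /=; apply: eq_bigr => w _.
by rewrite [w \in [set _ in _ | _]]inE; case: (w \in nbrsU b); case: (bad u w).
Qed.

(* Double counting: a bad pair (u, w) has fewer than 5t common neighbours outside U. *)
Lemma sum_bad_pairs_rich : \sum_(b in rich) bad_pairs b <= #|U| * (#|U| * (5 * t)).
Proof.
apply: (@leq_trans (\sum_(b in ~: U) bad_pairs b)).
  by apply: leq_sum_subset; apply/fintype.subsetP => b; rewrite inE => /andP[].
under eq_bigr do rewrite bad_pairs_expand.
rewrite exchange_big /=; under eq_bigr do rewrite exchange_big /=.
rewrite -sum_nat_const; apply: leq_sum => u _.
rewrite -sum_nat_const; apply: leq_sum => w _.
have -> : \sum_(b in ~: U) e b u * (e b w * bad u w) = bad u w * codeg e U u w.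
  rewrite mulnC /codeg -sum1_card big_distrl /= big_mkcond [RHS]big_mkcond /=.
  apply: eq_bigr => b _; rewrite !inE (e_sym b u) (e_sym b w).
  by case: (b \in U); case: (e u b); case: (e w b); case: (bad u w).
by rewrite /bad; case: (u != w) => //=; case: ltnP => // h; rewrite mul1n ltnW.
Qed.

Lemma exists_rich_few_bad : exists2 b, b \in rich & 50 * bad_pairs b <= d0 * d0.
Proof.
have [b /andP[rb fb] | none] :=
  pickP [pred b | (b \in rich) && (50 * bad_pairs b <= d0 * d0)]; first by exists b.
exfalso; set X := (d0 * d0).+1.
have many : #|rich| * X <= 50 * (#|U| * (#|U| * (5 * t))).
  rewrite -sum_nat_const; apply: leq_trans (_ : \sum_(b in rich) 50 * bad_pairs b <= _).
    by apply: leq_sum => b rb; move/negbT: (none b); rewrite /= rb -ltnNge.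
  by rewrite -big_distrr leq_mul2l sum_bad_pairs_rich orbT.
have d_gt0 : 0 < d by lia.
have e1 : d * #|~: U| * X <= 4 * (#|rich| * #|U|) * X.
  by rewrite leq_mul2r card_rich_large orbT.
have e2 : 4 * #|U| * (#|rich| * X) <= 4 * #|U| * (50 * (#|U| * (#|U| * (5 * t)))).
  by rewrite leq_mul2l many orbT.
have e3 : 1000 * t * (#|U| * (#|U| * #|U|)) <= d * (#|U| * (#|U| * #|U|)).
  by rewrite leq_mul2r t_le orbT.
have e4 : d * (#|U| * (#|U| * #|U|)) <= d * ((d * L) * ((d * L) * (d * L))).
  by rewrite leq_mul2l (leq_mul card_U (leq_mul card_U card_U)) orbT.
have outside : #|~: U| * X <= (d * L) * ((d * L) * (d * L)).
  by rewrite -(leq_pmul2l d_gt0); move: e1 e2 e3 e4; nia.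
have e5 : 1023 * (d * (L * (L * L))) * X <= #|~: U| * X.
  by rewrite leq_mul2r card_outside_large orbT.
have e6 : (d * d) * (d * (L * (L * L))) <= (256 * (d0 * d0)) * (d * (L * (L * L))).
  by apply: leq_mul => //; have := d0_ge; nia.
have pos : 0 < d * (L * (L * L)) by rewrite !muln_gt0 d_gt0 L_gt0.
by move: outside e5 e6 pos; rewrite /X; nia.
Qed.

Definition branch_set (b : T) : {set T} :=
  [set a in nbrsU b | 10 * bad_deg (nbrsU b) a < d0].

Lemma card_branch_set b : b \in rich -> 50 * bad_pairs b <= d0 * d0 ->
  4 * d0 <= 5 * #|branch_set b|.
Proof.
move=> rb few; set A := nbrsU b; set B := branch_set b.
have cA : d0 <= #|A| by move: rb; rewrite inE => /andP[].
have sBA : B \subset A by apply/fintype.subsetP => a; rewrite inE => /andP[].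
have cAB : #|A :\: B| * d0 <= 10 * bad_pairs b.
  rewrite -sum_nat_const; apply: (@leq_trans (\sum_(a in A :\: B) 10 * bad_deg A a)).
    by apply: leq_sum => a; rewrite !inE => /andP[+ aA]; rewrite aA /= -leqNgt.
  rewrite /bad_pairs -big_distrr /= leq_mul2l; apply/orP; right.
  by apply: leq_sum_subset; apply: subsetDl.
have d0_gt0 : 0 < d0 by have := d0_large; lia.
have cAB5 : 5 * #|A :\: B| <= d0.
  by rewrite -(leq_pmul2r d0_gt0); move: cAB few; nia.
have := cardsID B A; rewrite (finset.setIidPr sBA); lia.
Qed.

Lemma branch_set_avail b (C O : {set T}) a a' :
  b \in rich -> 50 * bad_pairs b <= d0 * d0 ->
  a \in branch_set b -> a' \in branch_set b -> a \in C -> a' \in C ->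
  #|C| <= t -> #|O| <= t ->
  exists y, [/\ y \notin O, y \in U, y \notin C,
                5 * t <= codeg e U a y & 5 * t <= codeg e U a' y].
Proof.
move=> rb few aB a'B aC a'C card_C card_O.
set A := nbrsU b; set B := branch_set b.
set X := O :|: C :|: [set w in A | bad a w] :|: [set w in A | bad a' w].
have cardsU_le (P Q : {set T}) : #|P :|: Q| <= #|P| + #|Q| by rewrite cardsU leq_subr.
have card_X : #|X| <= t + t + bad_deg A a + bad_deg A a'.
  apply: leq_trans (cardsU_le _ _) _; rewrite leq_add2r.
  apply: leq_trans (cardsU_le _ _) _; rewrite leq_add2r.
  by apply: leq_trans (cardsU_le _ _) _; apply: leq_add.
have bad_a : 10 * bad_deg A a < d0 by move: aB; rewrite inE => /andP[].
have bad_a' : 10 * bad_deg A a' < d0 by move: a'B; rewrite inE => /andP[].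
have card_B : 4 * d0 <= 5 * #|B| := card_branch_set rb few.
have d0t := d0_large.
have card_BX := subset_leq_card (subsetIr B X); have split_B := cardsID X B.
have /card_gt0P[y] : 0 < #|B :\: X| by lia.
rewrite !inE !negb_or => /and3P[/andP[/andP[/andP[yO yC] bad1] bad2] /andP[eby yU] _].
move: bad1 bad2; rewrite eby yU /= /bad !negb_and !negbK -!leqNgt.
have ya : a != y by apply: contraNneq yC => <-.
have ya' : a' != y by apply: contraNneq yC => <-.
by rewrite (negbTE ya) (negbTE ya') /= => bad1 bad2; exists y.
Qed.

Lemma sparse_remainder_immersion : has_Kt_l_immersion e t 3.
Proof.
have [b rb few] := exists_rich_few_bad.
set B := branch_set b.
have card_B : 4 * d0 <= 5 * #|B| := card_branch_set rb few.
have tB : t <= #|B| by have := d0_large; lia.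
pose phi (i : 'I_t) := enum_val (widen_ord tB i).
have phi_inj : injective phi by move=> i j /enum_val_inj /(congr1 val) /= /val_inj.
have phiB i : phi i \in B := enum_valP _.
have phiU i : phi i \in U by have := phiB i; rewrite !inE => /andP[/andP[_ ->]].
apply: (routing_immersion e_sym phi_inj phiU) => i j O _ card_O.
have card_C : #|[set x in codom phi]| <= t.
  by rewrite cardsE; apply: leq_trans (card_size _) _; rewrite size_codom card_ord.
have phiC k : phi k \in [set x in codom phi] by rewrite inE codom_f.
have [y [yO yU yC deg_i deg_j]] :=
  branch_set_avail rb few (phiB i) (phiB j) (phiC i) (phiC j) card_C card_O.
by exists y; split=> //; move: yC; rewrite inE.
Qed.

End SparseRemainder.

Lemma mindeg_le_deg (T : finType) (e : rel T) v : mindeg e <= deg e v.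
Proof.
rewrite /mindeg; have : v \in index_enum T by rewrite mem_index_enum.
elim: (index_enum T) => [//|a r IH]; rewrite in_cons big_cons.
case/orP => [/eqP <- | vr]; first by rewrite geq_minl.
by apply: leq_trans (geq_minr _ _) (IH vr).
Qed.

Lemma K0_immersion (T : finType) (e : rel T) l : has_Kt_l_immersion e 0 l.
Proof.
have phi : 'I_0 -> T by case.
by exists phi, (fun _ _ => [::]); split; [case | split; case].
Qed.

Import Order.TTheory GRing.Theory Num.Theory.
Local Open Scope ring_scope.

Lemma avgdeg_del_lt_half (R : realType) (T : finType) (e : rel T)
    (W : {set {set T}}) (U : {set T}) (d : nat) :
  (#|U| < #|T|)%N -> avgdeg_del R e W U < d%:R / 2 ->
  (4 * #|del_edges e W U| < d * #|~: U|)%N.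
Proof.
rewrite /avgdeg_del -(cardsC U); case: eqP => [-> | /eqP]; first by rewrite addn0 ltnn.
rewrite -lt0n => U_gt0 _; rewrite -(ltr0n R) in U_gt0.
by rewrite -(ltr_nat R) !natrM ltr_pdivrMr //; lra.
Qed.

Lemma ln_pow_le_id (R : realType) (k : nat) (C : R) :
  exists K : R, forall y, K < y -> C * ln y ^+ k <= y /\ 1 <= ln y.
Proof.
set l0 := Num.max 1 (C * k.+1`!%:R).
exists (expR l0) => y l0_lt.
have y_gt0 : 0 < y := lt_trans (expR_gt0 _) l0_lt.
have l0_le : l0 <= ln y by rewrite -[l0]expRK ler_ln ?posrE ?expR_gt0 // ltW.
have ln_ge1 : 1 <= ln y by apply: le_trans l0_le; rewrite le_max lexx.
have C_le : C * k.+1`!%:R <= ln y by apply: le_trans l0_le; rewrite le_max lexx orbT.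
split=> //; rewrite -[leRHS]lnK ?posrE //.
apply: le_trans (expR_ge1Dxn k (le_trans ler01 ln_ge1)).
apply: le_trans (_ : ln y ^+ k.+1 / k.+1`!%:R <= _); last by rewrite lerDr.
have fact_gt0 : 0 < k.+1`!%:R :> R by rewrite ltr0n fact_gt0.
rewrite ler_pdivlMr // exprSr mulrAC [leRHS]mulrC ler_wpM2r //.
by rewrite exprn_ge0 // (le_trans ler01 ln_ge1).
Qed.

(* (m^x)^3 <= m^297 is a polynomial of degree 891 in ln (n/d). *)
Lemma log_cube_power_bound (R : realType) (eps1 eps2 : R) :
  0 < eps1 < 1 -> 0 < eps2 < 1 ->
  exists K : R, forall a b : R, 0 < b -> K < a / b ->
    let m := 2 / eps1 * ln (15 * a / (eps2 * b)) ^+ 3 in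
    1 <= m /\ forall x : nat, (x < 100)%N -> 8192 * (m ^+ x) ^+ 3 <= a / b.
Proof.
move=> /andP[eps1_gt0 eps1_lt1] /andP[eps2_gt0 eps2_lt1].
set C := 8192 * (2 / eps1) ^+ 297 * (15 / eps2).
have [K HK] := ln_pow_le_id 891 C.
exists (K * eps2 / 15) => a b b_gt0 Kr m.
have eps2_neq0 : eps2 != 0 by rewrite gt_eqF.
set r := a / b in Kr *.
rewrite /m (_ : 15 * a / (eps2 * b) = 15 * r / eps2); last by rewrite /r invfM; ring.
have [C_le ln_ge1] : C * ln (15 * r / eps2) ^+ 891 <= 15 * r / eps2 /\
                     1 <= ln (15 * r / eps2).
  by apply: HK; move: Kr; rewrite ltr_pdivrMr // ltr_pdivlMr //; lra.
set l := ln (15 * r / eps2) in C_le ln_ge1 *.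
have two_eps1 : 1 <= 2 / eps1 by rewrite ler_pdivlMr // mul1r; lra.
have m_ge1 : 1 <= 2 / eps1 * l ^+ 3 by apply: mulr_ege1 => //; apply: exprn_ege1.
split=> // x x_lt100; set M := 2 / eps1 * l ^+ 3 in m_ge1 *.
have M_ge0 : 0 <= M := le_trans ler01 m_ge1.
have Mx : M ^+ x <= M ^+ 99.
  by rewrite -(subnKC (_ : (x <= 99)%N)) // exprD ler_peMr ?exprn_ge0 ?exprn_ege1.
apply: le_trans (_ : 8192 * (M ^+ 99) ^+ 3 <= _).
  by rewrite ler_pM2l ?ltr0n // lerXn2r ?nnegrE ?exprn_ge0.
have -> : 8192 * (M ^+ 99) ^+ 3 = C * l ^+ 891 * (eps2 / 15).
  rewrite /C /M -exprM exprMn -exprM.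
  by move: ((2 / eps1) ^+ _) (l ^+ _) => P Q; field.
apply: le_trans (_ : 15 * r / eps2 * (eps2 / 15) <= _); first by rewrite ler_pM2r ?divr_gt0.
by have -> : 15 * r / eps2 * (eps2 / 15) = r by field.
Qed.

Lemma truncnS_bounds (R : realType) (M : R) : 1 <= M ->
  M <= (Num.truncn M).+1%:R /\ (Num.truncn M).+1%:R <= 2 * M.
Proof.
move=> M_ge1; split; first exact/ltW/truncnS_gt.
have : (Num.truncn M)%:R <= M by rewrite truncn_le (le_trans ler01 M_ge1).
by rewrite -addn1 natrD; lra.
Qed.

Lemma cube_le_of_ratio (R : realType) (n d L : nat) (M : R) : (0 < d)%N ->
  0 <= M -> L%:R <= 2 * M -> 8192 * M ^+ 3 <= n%:R / d%:R ->
  (1024 * (d * (L * (L * L))) <= n)%N.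
Proof.
move=> d_gt0 M_ge0 LM ratio; rewrite -(ler_nat R) !natrM.
have d_pos : 0 < d%:R :> R by rewrite ltr0n.
have L3 : L%:R * (L%:R * L%:R) <= 8 * M ^+ 3 :> R.
  have -> : 8 * M ^+ 3 = 2 * M * (2 * M * (2 * M)) by ring.
  by rewrite ler_pM ?mulr_ge0 ?ler_pM.
apply: le_trans (_ : 1024%:R * (d%:R * (8 * M ^+ 3)) <= _).
  by rewrite ler_pM2l ?ltr0n // ler_pM2l.
have -> : 1024%:R * (d%:R * (8 * M ^+ 3)) = d%:R * (8192 * M ^+ 3) :> R by ring.
have -> : n%:R = d%:R * (n%:R / d%:R) :> R by rewrite mulrC divfK // gt_eqF.
by rewrite ler_pM2l.
Qed.

Lemma truncn_thousandth_le (R : realType) (d : nat) :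
  (1000 * Num.truncn (1 / 1000 * d%:R : R) <= d)%N.
Proof.
set t := Num.truncn _.
have : t%:R <= 1 / 1000 * d%:R :> R.
  by rewrite truncn_le; apply: mulr_ge0 (ler0n _ _); apply: divr_ge0 ler01 (ler0n _ _).
rewrite -(ler_nat R) natrM; lra.
Qed.

Unset Implicit Arguments.

Theorem lemma5p2 (R : realType) (eps1 eps2 : R) :
  0 < eps1 < 1 -> 0 < eps2 < 1 ->
  exists (c : R) (K : R), 0 < c /\
    forall (n d : nat), (0 < d)%N -> K < n%:R / d%:R ->
    forall (T : finType) (e : rel T),
      simple_graph e -> #|T| = n -> mindeg e = d ->
      ~ has_Kt_l_immersion e (Num.truncn (c * d%:R)) 3 ->
      let m : R := 2 / eps1 * (ln (15 * n%:R / (eps2 * d%:R))) ^+ 3 in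
      forall x : nat, (0 < x < 100)%N ->
        stg_dense e (d%:R * m ^+ x) ((d ^ 2)%:R * m ^+ x) (d%:R / 2).
Proof.
move=> eps1_bd eps2_bd; have [K HK] := log_cube_power_bound eps1_bd eps2_bd.
exists (1 / 1000), K; split; first by rewrite divr_gt0 ?ltr01 ?ltr0n.
move=> n d d_gt0 nK T e [e_sym e_irr] card_T mindeg_d no_imm m x /andP[_ x_lt100].
have d_pos : 0 < d%:R :> R by rewrite ltr0n.
have [m_ge1 /(_ x x_lt100) ratio] := HK _ _ d_pos nK.
have [ML LM] := truncnS_bounds (exprn_ege1 x m_ge1).
set L := (Num.truncn (m ^+ x)).+1 in ML LM.
have L_gt0 : (0 < L)%N by [].
have card_T_large := cube_le_of_ratio d_gt0 (le_trans ler01 (exprn_ege1 x m_ge1)) LM ratio.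
rewrite -card_T in card_T_large.
move=> U W W_sub U_small W_small; rewrite leNgt; apply/negP => sparse.
have card_U : (#|U| <= d * L)%N.
  by rewrite -(ler_nat R) natrM (le_trans U_small) // ler_pM2l.
have card_W : (#|W| <= d * d * L)%N.
  by rewrite -(ler_nat R) mulnn natrM (le_trans W_small) // ler_pM2l // ltr0n expn_gt0 d_gt0.
have U_lt_T := ltn_of_cube_bound d_gt0 L_gt0 card_U card_T_large.
have [t0 | t_gt0] := posnP (Num.truncn (1 / 1000 * d%:R : R)).
  by apply: no_imm; rewrite t0; exact: K0_immersion.
apply/no_imm/(sparse_remainder_immersion e_sym e_irr _ card_U card_W L_gt0
  card_T_large (truncn_thousandth_le R d) t_gt0).
- by move=> v; rewrite -mindeg_d mindeg_le_deg.
- exact: avgdeg_del_lt_half sparse.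
Qed.
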